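(* Let $M$ be a magma satisfying $(xy)z = xx$ and $x(yz) = xy$ for all $x,y,z\in M$. Then $M$ satisfies $xy = xz$ and $(xy)z = xy$ for all $x,y,z\in M$ if and only if $M$ avoids the magma $E$ on $\{0,1,2,3\}$ with Cayley table \[ \begin{array}{c|cccc} E & 0 & 1 & 2 & 3 \\ \hline 0 & 2 & 3 & 2 & 2 \\ 1 & 1 & 1 & 1 & 1 \\ 2 & 2 & 2 & 2 & 2 \\ 3 & 2 & 2 & 2 & 2 \end{array}. \]
   Context: A magma is a nonempty set with a binary operation, written by juxtaposition. A magma $M$ avoids a magma $F$ if no submagma of $M$ is isomorphic to $F$. In the Cayley table, the entry in row $i$, column $j$ is $i\cdot j$. *)

Inductive E4 : Type := e0 | e1 | e2 | e3.

Definition Eop (x y : E4) : E4 :=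
  match x, y with
  | e0, e0 => e2 | e0, e1 => e3 | e0, e2 => e2 | e0, e3 => e2
  | e1, _ => e1
  | e2, _ => e2
  | e3, _ => e2
  end.

Definition is_submagma {M : Type} (op : M -> M -> M) (S : M -> Prop) : Prop :=
  (exists x, S x) /\ (forall x y, S x -> S y -> S (op x y)).

Definition submagma_iso {M F : Type} (op : M -> M -> M) (S : M -> Prop)
  (opF : F -> F -> F) : Prop :=
  exists f : F -> M,
    (forall a, S (f a)) /\
    (forall a b, f a = f b -> a = b) /\
    (forall x, S x -> exists a, f a = x) /\
    (forall a b, f (opF a b) = op (f a) (f b)).

Definition avoids {M F : Type} (op : M -> M -> M) (opF : F -> F -> F) : Prop :=
  ~ (exists S : M -> Prop, is_submagma op S /\ submagma_iso op S opF).

From Stdlib Require Import Classical.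

(* Under (xy)z = xx the second identity follows from left constancy
   xy = xz.  If left constancy fails, then ab <> aa for some a, b, and
   a, bb, aa, ab are pairwise distinct: left multiplication by a separates
   bb from aa and ab, and a cannot be a product since products are left
   constant.  So 0, 1, 2, 3 |-> a, bb, aa, ab embeds E.  Conversely E is not
   left constant (00 <> 01), and left constancy passes to submagmas. *)

Definition left_constant {M : Type} (op : M -> M -> M) : Prop :=
  forall x y z, op x y = op x z.

Definition magma_hom {F M : Type} (opF : F -> F -> F) (op : M -> M -> M)
  (f : F -> M) : Prop :=
  forall a b, f (opF a b) = op (f a) (f b).

Lemma left_constant_hom_inj {F M : Type} (opF : F -> F -> F) (op : M -> M -> M)
  (f : F -> M) :
  magma_hom opF op f -> (forall a b, f a = f b -> a = b) ->
  left_constant op -> left_constant opF.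
Proof.
  intros Hf Hinj Hop x y z. apply Hinj. rewrite !Hf. apply Hop.
Qed.

Lemma avoids_of_left_constant {M F : Type} (op : M -> M -> M) (opF : F -> F -> F) :
  left_constant op -> ~ left_constant opF -> avoids op opF.
Proof.
  intros Hop HopF [S [_ [f [_ [Hinj [_ Hf]]]]]].
  exact (HopF (left_constant_hom_inj opF op f Hf Hinj Hop)).
Qed.

Lemma Eop_not_left_constant : ~ left_constant Eop.
Proof. intro H. discriminate (H e0 e0 e1). Qed.

Lemma not_avoids_of_hom_inj {F M : Type} (opF : F -> F -> F) (op : M -> M -> M)
  (f : F -> M) (a0 : F) :
  magma_hom opF op f -> (forall a b, f a = f b -> a = b) -> ~ avoids op opF.
Proof.
  intros Hf Hinj Hav. apply Hav.
  exists (fun x => exists a, f a = x). split.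
  - split; [exists (f a0), a0; reflexivity |].
    intros x y [a <-] [b <-]. exists (opF a b). apply Hf.
  - exists f. repeat split; [intro a; exists a; reflexivity | exact Hinj | | exact Hf].
    intros x [a <-]. exists a. reflexivity.
Qed.

Section Embedding.

Variables (M : Type) (op : M -> M -> M).
Hypothesis H1 : forall x y z, op (op x y) z = op x x.
Hypothesis H2 : forall x y z, op x (op y z) = op x y.
Variables a b : M.

Definition embedE (e : E4) : M :=
  match e with e0 => a | e1 => op b b | e2 => op a a | e3 => op a b end.

Lemma embedE_hom : magma_hom Eop op embedE.
Proof.
  intros x y; destruct x, y; simpl; symmetry;
    first [reflexivity | apply H1 | apply H2].
Qed.

Hypothesis Hab : op a b <> op a a.

Lemma not_product_of_neq : forall x y, a <> op x y.
Proof. intros x y E. apply Hab. rewrite E, !H1. reflexivity. Qed.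

Lemma embedE_inj : forall e e', embedE e = embedE e' -> e = e'.
Proof.
  pose proof (not_product_of_neq b b) as d1.
  pose proof (not_product_of_neq a a) as d2.
  pose proof (not_product_of_neq a b) as d3.
  assert (d4 : op b b <> op a a).
  { intro E. apply Hab. rewrite <- (H2 a b b), E, H2. reflexivity. }
  assert (d5 : op b b <> op a b).
  { intro E. apply Hab. rewrite <- (H2 a b b), E, H2. reflexivity. }
  intros e e'; destruct e, e'; simpl; intro E; congruence.
Qed.

End Embedding.

Lemma left_constant_of_avoids (M : Type) (op : M -> M -> M)
  (H1 : forall x y z, op (op x y) z = op x x)
  (H2 : forall x y z, op x (op y z) = op x y) :
  avoids op Eop -> left_constant op.
Proof.
  intros Hav.
  assert (Hsq : forall x y, op x y = op x x).
  { intros x y. apply NNPP. intro Hxy.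
    exact (not_avoids_of_hom_inj Eop op (embedE M op x y) e0
             (embedE_hom M op H1 H2 x y) (embedE_inj M op H1 H2 x y Hxy) Hav). }
  intros x y z. rewrite (Hsq x y), (Hsq x z). reflexivity.
Qed.

Theorem mainTheorem12 (M : Type) (op : M -> M -> M) (m0 : M)
  (H1 : forall x y z : M, op (op x y) z = op x x)
  (H2 : forall x y z : M, op x (op y z) = op x y) :
  ((forall x y z : M, op x y = op x z) /\
   (forall x y z : M, op (op x y) z = op x y))
  <-> avoids op Eop.
Proof.
  split.
  - intros [Hlc _]. exact (avoids_of_left_constant op Eop Hlc Eop_not_left_constant).
  - intros Hav. pose proof (left_constant_of_avoids M op H1 H2 Hav) as Hlc.
    split; [exact Hlc |].
    intros x y z. rewrite H1. apply Hlc.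
Qed.
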